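(* Consider a main effect plan on $n$ runs with factors $F_1,\dots,F_m$ ($m\ge 3$) in which every level of every factor occurs, and fix $i\in\{1,\dots,m\}$. Let $\bar i=\{1,\dots,m+1\}\setminus\{i\}$. (a) $SS_{i;\bar i}=SS_{i;\{m+1\}}$ as functions of $Y\in\mathbb R^n$ if and only if for every $j\in\{1,\dots,m\}\setminus\{i\}$ the incidence matrix $N_{ij}$ satisfies the proportional frequency condition $N_{ij}=r_ir_j'/n$. (b) Suppose $i\le m-1$. Then $SS_{i;\bar i}=SS_{i;\{m,m+1\}}$ as functions of $Y$ if and only if $N_{ij}=N_{im}R_m^{-1}N_{jm}'$ for every $j\in\{1,\dots,m-1\}\setminus\{i\}$.
   Context: Model: $Y=\mathbf 1_n\mu+\sum_{i=1}^m X_i\alpha^i+\epsilon$, where $F_i$ has $a_i$ levels and $X_i$ is the $n\times a_i$ 0-1 design matrix ($(u,t)$ entry $1$ iff $F_i$ is at level $t$ in run $u$); put $X_{m+1}=\mathbf 1_n$. $N_{ij}=X_i'X_j$ is the incidence matrix of $F_i,F_j$ (entry $(s,t)$ = number of runs with $F_i$ at level $s$ and $F_j$ at level $t$), $r_i=X_i'\mathbf 1_n$ is the replication vector of $F_i$, and $R_i=\mathrm{diag}(r_i)$. $P_A=A(A'A)^-A'$ is the orthogonal projector onto the column space of $A$; for $S\subseteq\{1,\dots,m+1\}$, $P_S$ is the projector onto the column space of $[X_j]_{j\in S}$. For $i\notin T$: $C_{i;T}=X_i'(I-P_T)X_i$, $Q_{i;T}=X_i'(I-P_T)Y$, $SS_{i;T}=Q_{i;T}'(C_{i;T})^-Q_{i;T}$.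 *)

From HB Require Import structures.
From mathcomp Require Import all_boot all_order all_algebra.
Set Implicit Arguments. Unset Strict Implicit. Unset Printing Implicit Defensive.
Import Order.TTheory GRing.Theory Num.Theory.
Local Open Scope ring_scope.

(* The "terms" of the model are indexed by 'I_m.+1: index (lift ord_max k)
   (value k) is factor k (paper's F_{k+1}), and ord_max (value m) is the
   intercept X_{m+1} = 1_n. *)

Definition fac (m : nat) (k : 'I_m) : 'I_m.+1 := lift ord_max k.

Definition nlev (m : nat) (a : 'I_m -> nat) (j : 'I_m.+1) : nat :=
  if unlift ord_max j is Some k then a k else 1%N.

Definition Xd (R : fieldType) (n m : nat) (a : 'I_m -> nat)
  (lev : forall k : 'I_m, 'I_n -> 'I_(a k)) (j : 'I_m.+1)
  : 'M[R]_(n, nlev a j) :=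
  \matrix_(u < n, t < nlev a j)
    (if unlift ord_max j is Some k then nat_of_ord (lev k u) == nat_of_ord t
     else true)%:R.

Definition Nmx (R : fieldType) n m a lev (j k : 'I_m.+1) :=
  (@Xd R n m a lev j)^T *m (@Xd R n m a lev k).

Definition rvec (R : fieldType) n m a lev (j : 'I_m.+1) : 'cV[R]_(nlev a j) :=
  (@Xd R n m a lev j)^T *m const_mx 1.

Definition Rdiag (R : fieldType) n m a lev (j : 'I_m.+1) : 'M[R]_(nlev a j) :=
  diag_mx (@rvec R n m a lev j)^T.

(* Orthogonal projector P_A = A (A'A)^- A', with the generalized inverse
   (A'A)^- taken to be mathcomp's pinvmx (which satisfies B B^- B = B). *)
Definition projmx (R : fieldType) (n p : nat) (A : 'M[R]_(n, p)) : 'M[R]_n :=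
  A *m pinvmx (A^T *m A) *m A^T.

(* P_S: projector onto the column space of [X_j]_{j in S}; the columns of
   the n x n matrix spanS^T span exactly that column space. *)
Definition spanS (R : fieldType) n m a lev (S : {set 'I_m.+1}) : 'M[R]_n :=
  (\sum_(j in S) <<(@Xd R n m a lev j)^T>>)%MS.

Definition PS (R : fieldType) n m a lev (S : {set 'I_m.+1}) : 'M[R]_n :=
  projmx (@spanS R n m a lev S)^T.

Definition Cmx (R : fieldType) n m a lev (i : 'I_m.+1) (T : {set 'I_m.+1}) :=
  (@Xd R n m a lev i)^T *m (1%:M - @PS R n m a lev T) *m (@Xd R n m a lev i).

Definition Qmx (R : fieldType) n m a lev (i : 'I_m.+1) (T : {set 'I_m.+1})
  (Y : 'cV[R]_n) :=
  (@Xd R n m a lev i)^T *m (1%:M - @PS R n m a lev T) *m Y.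

Definition SS (R : fieldType) n m a lev (i : 'I_m.+1) (T : {set 'I_m.+1})
  (Y : 'cV[R]_n) : 'M[R]_1 :=
  (@Qmx R n m a lev i T Y)^T *m pinvmx (@Cmx R n m a lev i T)
    *m (@Qmx R n m a lev i T Y).

From HB Require Import structures.
From mathcomp Require Import all_boot all_order all_algebra.
From mathcomp Require Import zify.
Import Order.TTheory GRing.Theory Num.Theory.
Local Open Scope ring_scope.
Set Implicit Arguments.
Unset Strict Implicit.
Unset Printing Implicit Defensive.

(* [SS_{i;T}(Y)] is the quadratic form in [Y] of the orthogonal projector onto
   the column space of [(I - P_T) X_i], so two sums of squares coincide as
   functions of [Y] iff these column spaces coincide.  When [span T] lies in
   [span T'], this happens iff [(I - P_T) X_i] is orthogonal to every [X_j] with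
   [j] in [T'].  If moreover [span T] is the column space of some [Z] with [Z'Z]
   invertible ([Z = 1_n] for [T = {m+1}], [Z = X_m] for [T = {m, m+1}]), then
   [P_T = Z (Z'Z)^{-1} Z'] and the orthogonality reads
   [N_ij = X_i' Z (Z'Z)^{-1} Z' X_j], which specialises to the two
   conditions. *)

Section Projector.
Variable R : realFieldType.

Lemma mulmx_trmx_self_eq0 n (v : 'rV[R]_n) : v *m v^T = 0 -> v = 0.
Proof.
move/matrixP/(_ 0 0); rewrite !mxE => v2_eq0.
have : \sum_j v 0 j ^+ 2 == 0.
  by rewrite -{2}v2_eq0; apply/eqP/eq_bigr => j _; rewrite mxE expr2.
rewrite psumr_eq0; last by move=> j _; exact: sqr_ge0.
move/allP => vj_eq0; apply/matrixP => i j; rewrite mxE (ord1 i).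
by have := vj_eq0 j (mem_index_enum _); rewrite sqrf_eq0 => /eqP.
Qed.

Lemma submx_gram n p (A : 'M[R]_(n, p)) : (A <= A^T *m A)%MS.
Proof.
have ker_sub : (kermx (A^T *m A) <= kermx A^T)%MS.
  apply/sub_kermxP; apply/row_matrixP => i; rewrite row0 row_mul.
  apply: mulmx_trmx_self_eq0.
  rewrite trmx_mul trmxK mulmxA -(mulmxA _ A^T) -row_mul mulmx_ker.
  by rewrite row0 mul0mx.
have := mxrankS ker_sub; rewrite !mxrank_ker mxrank_tr => rank_le.
have gram_sub : (A^T *m A <= A)%MS by exact: submxMl.
have := mxrank_leqif_sup gram_sub => [[_ <-]].
have := mxrankS gram_sub; have := rank_leq_row (A^T *m A).
by have := rank_leq_col A; move=> *; apply/eqP; lia.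
Qed.

Section OneMatrix.
Variables (n p : nat) (A : 'M[R]_(n, p)).

Lemma projmxK : projmx A *m A = A.
Proof. by rewrite /projmx -mulmxA mulmxKpV // submx_gram. Qed.

Lemma trmx_projmx : (projmx A)^T = projmx A.
Proof.
set G := pinvmx (A^T *m A).
have AGM : A *m G *m (A^T *m A) = A by rewrite mulmxKpV // submx_gram.
have MGA : A^T *m A *m (G^T *m A^T) = A^T.
  by rewrite -[RHS](congr1 trmx AGM) !trmx_mul trmxK !mulmxA.
have eP : projmx A = A *m G^T *m A^T.
  transitivity (A *m G *m (A^T *m A *m (G^T *m A^T))); first by rewrite MGA.
  by rewrite mulmxA AGM mulmxA.
by rewrite {1}eP !trmx_mul !trmxK mulmxA.
Qed.

Lemma trmx_mul_projmx : A^T *m projmx A = A^T.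
Proof. by rewrite -trmx_projmx -trmx_mul projmxK. Qed.

Lemma projmx_sub : (projmx A <= A^T)%MS.
Proof. exact: submxMl. Qed.

Lemma projmx_idem : projmx A *m projmx A = projmx A.
Proof. by rewrite {1}/projmx -mulmxA trmx_mul_projmx. Qed.

Lemma projmx_unique (Q : 'M_n) :
  Q^T = Q -> (Q <= A^T)%MS -> A^T *m Q = A^T -> projmx A = Q.
Proof.
move=> symQ /submxP[D defQ] fixQ.
have QP : Q *m projmx A = Q by rewrite defQ -mulmxA trmx_mul_projmx.
have /submxP[E defP] := projmx_sub.
have PQ : projmx A *m Q = projmx A by rewrite defP -mulmxA fixQ.
by rewrite -PQ -{1}symQ -trmx_projmx -trmx_mul QP symQ.
Qed.

Lemma mulmx_projmx_eq0 k (Z : 'M_(k, n)) : Z *m projmx A = 0 <-> Z *m A = 0.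
Proof.
split => [ZP0 | ZA0]; last by rewrite /projmx !mulmxA ZA0 !mul0mx.
by rewrite -projmxK mulmxA ZP0 mul0mx.
Qed.

End OneMatrix.

Lemma projmx_eq n p q (A : 'M[R]_(n, p)) (B : 'M[R]_(n, q)) :
  projmx A = projmx B <-> (A^T == B^T)%MS.
Proof.
have trmx_sub_projmx p' (C : 'M[R]_(n, p')) : (C^T <= projmx C)%MS.
  by rewrite -{1}trmx_mul_projmx submxMl.
split => [eqPAB | /andP[subAB subBA]].
  apply/andP; split.
    by rewrite (submx_trans (trmx_sub_projmx _ A)) // eqPAB projmx_sub.
  by rewrite (submx_trans (trmx_sub_projmx _ B)) // -eqPAB projmx_sub.
apply: projmx_unique; rewrite ?trmx_projmx ?(submx_trans (projmx_sub B)) //.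
by move/submxP: subAB => [D ->]; rewrite -mulmxA trmx_mul_projmx.
Qed.

(* Polarisation with [e_u + e_v]; this is where [2 != 0] is needed. *)
Lemma sym_quadratic_form_eq0 n (S : 'M[R]_n) :
  S^T = S -> (forall Y : 'cV_n, Y^T *m S *m Y = 0) -> S = 0.
Proof.
move=> symS formS0.
pose e (u : 'I_n) : 'cV[R]_n := delta_mx u 0.
have formE u v : (e u)^T *m S *m e v = (S u v)%:M.
  apply/matrixP => p q; rewrite (ord1 p) (ord1 q) trmx_delta -rowE -colE.
  by rewrite !mxE.
apply/matrixP => u v; rewrite mxE.
have /matrixP/(_ 0 0) := formS0 (e u + e v).
have /matrixP/(_ 0 0) := formS0 (e u); have /matrixP/(_ 0 0) := formS0 (e v).
have -> : (e u + e v)^T = (e u)^T + (e v)^T by rewrite linearD.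
rewrite mulmxDr !mulmxDl !formE !mxE /= !mulr1n => -> -> /=.
have -> : S v u = S u v by rewrite -{1}symS mxE.
by rewrite add0r addr0 -mulr2n => /eqP; rewrite mulrn_eq0 orFb => /eqP.
Qed.

Lemma compl_projmx_eqmx n p q k (AU : 'M[R]_(n, p)) (AV : 'M[R]_(n, q))
    (Z : 'M_(k, n)) :
  (AU^T <= AV^T)%MS ->
  (Z *m (1%:M - projmx AV) == Z *m (1%:M - projmx AU))%MS
    <-> Z *m (1%:M - projmx AU) *m AV = 0.
Proof.
move=> subUV; rewrite -mulmx_projmx_eq0.
have PUV : projmx AU *m projmx AV = projmx AU.
  have /submxP[D ->] := submx_trans (projmx_sub AU) subUV.
  by rewrite -mulmxA trmx_mul_projmx.
split => [/andP[_ /submxP[W ->]] | ZP0].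
  by rewrite -!mulmxA mulmxBl mul1mx projmx_idem subrr !mulmx0.
have ZPV : Z *m projmx AV = Z *m projmx AU.
  apply/eqP; rewrite -subr_eq0; move: ZP0.
  by rewrite mulmxBr mulmx1 mulmxBl -mulmxA PUV => ->.
by rewrite !mulmxBr !mulmx1 ZPV; apply/eqmxP.
Qed.

End Projector.

Lemma forall_setD1_fac m (i : 'I_m) (Pr : 'I_m.+1 -> Prop) :
  (forall j, j \in [set: 'I_m.+1] :\ fac i -> Pr j)
    <-> Pr ord_max /\ (forall k : 'I_m, k != i -> Pr (fac k)).
Proof.
split=> [Pall | [Pmax Pfac] j].
  split; first by apply: Pall; rewrite in_setD1 in_setT andbT neq_lift.
  by move=> k ki; apply: Pall; rewrite in_setD1 in_setT andbT (inj_eq lift_inj).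
rewrite in_setD1 in_setT andbT; case: (unliftP ord_max j) => [k -> | ->] // ki.
by apply: Pfac; move: ki; rewrite (inj_eq lift_inj).
Qed.

Section Design.
Variables (R : realFieldType) (n m : nat) (a : 'I_m -> nat)
  (lev : forall k : 'I_m, 'I_n -> 'I_(a k)).

Local Notation X := (Xd R lev).
Local Notation P := (PS R lev).

Lemma trmx_compl_PS T : (1%:M - P T)^T = 1%:M - P T.
Proof. by rewrite linearB /= trmx1 trmx_projmx. Qed.

Lemma SS_projmx i T (Y : 'cV[R]_n) :
  SS lev i T Y = Y^T *m projmx ((1%:M - P T) *m X i) *m Y.
Proof.
have idem : (1%:M - P T) *m (1%:M - P T) = 1%:M - P T.
  by rewrite mulmxBl mul1mx mulmxBr mulmx1 projmx_idem subrr subr0.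
rewrite /SS.
have -> : Cmx R lev i T = ((1%:M - P T) *m X i)^T *m ((1%:M - P T) *m X i).
  by rewrite trmx_mul trmx_compl_PS /Cmx -!mulmxA (mulmxA (1%:M - P T)) idem.
have -> : Qmx lev i T Y = ((1%:M - P T) *m X i)^T *m Y.
  by rewrite trmx_mul trmx_compl_PS.
by rewrite /projmx trmx_mul trmxK !mulmxA.
Qed.

Lemma SS_eq_eqmx i U V :
  (forall Y : 'cV[R]_n, SS lev i V Y = SS lev i U Y)
    <-> (((1%:M - P V) *m X i)^T == ((1%:M - P U) *m X i)^T)%MS.
Proof.
rewrite -projmx_eq; split => [eqSS | eqPUV Y].
  apply/eqP; rewrite -subr_eq0; apply/eqP/sym_quadratic_form_eq0.
    by rewrite linearB /= !trmx_projmx.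
  by move=> Y; rewrite mulmxBr mulmxBl -!SS_projmx eqSS subrr.
by rewrite !SS_projmx eqPUV.
Qed.

Lemma mulmx_spanS_eq0 V k (Z : 'M[R]_(k, n)) :
  Z *m (spanS R lev V)^T = 0 <-> (forall j, j \in V -> Z *m X j = 0).
Proof.
split => [ZS0 j jV | ZX0].
  have /submxP[D defX] : ((X j)^T <= spanS R lev V)%MS.
    by apply: (sumsmx_sup j) => //; rewrite genmxE.
  by rewrite -(trmxK (X j)) defX trmx_mul mulmxA ZS0 mul0mx.
have /sub_sumsmxP[u ->] := submx_refl (spanS R lev V).
rewrite raddf_sum /= mulmx_sumr big1 // => j jV.
have /submxP[D ->] : (<<(X j)^T>> <= (X j)^T)%MS by rewrite genmxE.
by rewrite !trmx_mul trmxK !mulmxA ZX0 // !mul0mx.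
Qed.

Lemma spanS_subset (U V : {set 'I_m.+1}) :
  U \subset V -> (spanS R lev U <= spanS R lev V)%MS.
Proof.
move=> /subsetP subUV; apply/sumsmx_subP => j jU.
exact: (sumsmx_sup j) (subUV j jU) (submx_refl _).
Qed.

Lemma spanS_eqmx (U : {set 'I_m.+1}) q (Z : 'M[R]_(n, q)) j0 :
  j0 \in U -> (Z^T <= (X j0)^T)%MS ->
  (forall j, j \in U -> ((X j)^T <= Z^T)%MS) -> (spanS R lev U == Z^T)%MS.
Proof.
move=> j0U subZ subX; apply/andP; split.
  by apply/sumsmx_subP => j jU; rewrite genmxE subX.
by apply: submx_trans subZ _; apply: (sumsmx_sup j0) => //; rewrite genmxE.
Qed.

Lemma PS_gramE (U : {set 'I_m.+1}) q (Z : 'M[R]_(n, q)) :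
  (spanS R lev U == Z^T)%MS -> Z^T *m Z \in unitmx ->
  P U = Z *m invmx (Z^T *m Z) *m Z^T.
Proof.
move=> /andP[subUZ subZU] unitZ; apply: projmx_unique; rewrite ?trmxK.
- by rewrite !trmx_mul trmxK trmx_inv trmx_mul trmxK mulmxA.
- exact: submx_trans (submxMl _ _) subZU.
- move/submxP: subUZ => [D ->].
  rewrite -[LHS]mulmxA; congr (D *m _).
  by rewrite !mulmxA (mulmxV unitZ) mul1mx.
Qed.

Lemma Nmx_colspace_proj i j q (Z : 'M[R]_(n, q)) W :
  Z^T *m Z \in unitmx -> X j = Z *m W ->
  Nmx R lev i j = (X i)^T *m Z *m invmx (Z^T *m Z) *m Z^T *m X j.
Proof.
move=> unitZ defX; rewrite /Nmx defX !mulmxA -(mulmxA _ Z^T Z).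
by rewrite -(mulmxA _ (invmx _)) (mulVmx unitZ) mulmx1.
Qed.

Lemma SS_eq_incidence i (U V : {set 'I_m.+1}) q (Z : 'M[R]_(n, q)) :
  (spanS R lev U <= spanS R lev V)%MS -> (spanS R lev U == Z^T)%MS ->
  Z^T *m Z \in unitmx ->
  (forall Y : 'cV[R]_n, SS lev i V Y = SS lev i U Y)
    <-> (forall j, j \in V ->
           Nmx R lev i j = (X i)^T *m Z *m invmx (Z^T *m Z) *m Z^T *m X j).
Proof.
move=> subUV eqUZ unitZ.
have subUV' : (((spanS R lev U)^T)^T <= ((spanS R lev V)^T)^T)%MS.
  by rewrite !trmxK.
rewrite SS_eq_eqmx !trmx_mul !trmx_compl_PS (compl_projmx_eqmx _ subUV').
rewrite mulmx_spanS_eq0 -/(P U) (PS_gramE eqUZ unitZ).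
split => XPX0 j /XPX0; rewrite mulmxBr mulmx1 mulmxBl /Nmx !mulmxA.
  by move/eqP; rewrite subr_eq0 => /eqP.
by move=> ->; rewrite subrr.
Qed.

Lemma nlev_fac (k : 'I_m) : nlev a (fac k) = a k.
Proof. by rewrite /nlev /fac liftK. Qed.

Lemma nlev_max : nlev a ord_max = 1%N.
Proof. by rewrite /nlev unlift_none. Qed.

Lemma Xd_facE (k : 'I_m) u t : X (fac k) u t = ((lev k u : nat) == t)%:R.
Proof. by rewrite mxE /fac liftK. Qed.

Lemma Xd_maxE u t : X ord_max u t = 1.
Proof. by rewrite mxE unlift_none. Qed.

Lemma Xd_max_fac (k : 'I_m) : X ord_max = X (fac k) *m const_mx 1.
Proof.
apply/matrixP => u t; rewrite Xd_maxE mxE.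
have lev_lt : (lev k u < nlev a (fac k))%N by rewrite nlev_fac.
rewrite (bigD1 (Ordinal lev_lt)) //= big1 => [|s s_lev].
  by rewrite Xd_facE mxE /= eqxx mulr1 addr0.
by move: s_lev; rewrite Xd_facE -val_eqE /= eq_sym => /negbTE ->; rewrite mul0r.
Qed.

Lemma Nmx_fac_diag (k : 'I_m) : Nmx R lev (fac k) (fac k) = Rdiag R lev (fac k).
Proof.
apply/matrixP => s t; rewrite /Rdiag /Nmx !mxE.
have [<-|st] := eqVneq s t.
  rewrite mulr1n; apply: eq_bigr => u _; rewrite !mxE /fac liftK mulr1.
  by case: (_ == _); rewrite ?mul1r ?mul0r.
rewrite mulr0n big1 // => u _; rewrite !mxE /fac liftK.
have [->|] := eqVneq (lev k u : nat) s; last by rewrite mul0r.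
by rewrite val_eqE (negbTE st) mulr0.
Qed.

Lemma Rdiag_unitmx (k : 'I_m) :
  (forall t : 'I_(a k), exists u, lev k u = t) ->
  Rdiag R lev (fac k) \in unitmx.
Proof.
move=> occ; rewrite unitmxE det_diag unitfE; apply/prodf_neq0 => s _.
rewrite !mxE; under eq_bigr do rewrite !mxE /fac liftK mulr1.
rewrite -natr_sum pnatr_eq0 -lt0n.
have s_lt : (s < a k)%N by rewrite -nlev_fac.
have [u0 lev_u0] := occ (Ordinal s_lt).
by rewrite (bigD1 u0) //= lev_u0 eqxx.
Qed.

Lemma SS_eq_intercept_iff (i : 'I_m) : n != 0%N ->
  (forall Y : 'cV[R]_n, SS lev (fac i) ([set: 'I_m.+1] :\ fac i) Y
                        = SS lev (fac i) [set ord_max] Y)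
  <-> (forall j : 'I_m, j != i -> Nmx R lev (fac i) (fac j)
         = (n%:R)^-1 *: (rvec R lev (fac i) *m (rvec R lev (fac j))^T)).
Proof.
move=> n_neq0.
pose Z : 'M[R]_(n, 1) := const_mx 1.
have gramZ : Z^T *m Z = (n%:R)%:M.
  apply/matrixP => s t; rewrite (ord1 s) (ord1 t) !mxE.
  by under eq_bigr do rewrite !mxE mulr1; rewrite sumr_const card_ord.
have unitZ : Z^T *m Z \in unitmx.
  by rewrite gramZ unitmxE det_scalar expr1 unitfE pnatr_eq0.
have XZ : X ord_max = Z *m (const_mx 1 : 'M_(1, nlev a ord_max)).
  by apply/matrixP => u t; rewrite Xd_maxE !mxE big_ord1 !mxE mulr1.
have ZX : Z = X ord_max *m const_mx 1.
  apply/matrixP => u t; rewrite !mxE.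
  under eq_bigr do rewrite Xd_maxE mxE mulr1.
  by rewrite sumr_const card_ord nlev_max.
have projE j : (X (fac i))^T *m Z *m invmx (Z^T *m Z) *m Z^T *m X (fac j)
               = (n%:R)^-1 *: (rvec R lev (fac i) *m (rvec R lev (fac j))^T).
  rewrite gramZ invmx_scalar mul_mx_scalar /rvec trmx_mul trmx_const.
  by rewrite -!scalemxAl trmxK !mulmxA.
rewrite (@SS_eq_incidence (fac i) _ _ _ Z) ?forall_setD1_fac.
- split => [[_ Nfac] j ji | Nfac]; first by rewrite Nfac // projE.
  split; first exact: Nmx_colspace_proj unitZ XZ.
  by move=> j ji; rewrite projE Nfac.
- apply: spanS_subset; apply/subsetP => j; rewrite in_set1 => /eqP ->.
  by rewrite in_setD1 in_setT andbT neq_lift.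
- apply: (spanS_eqmx (j0 := ord_max)); first by rewrite in_set1.
    by rewrite {1}ZX trmx_mul submxMl.
  by move=> j; rewrite in_set1 => /eqP ->; rewrite XZ trmx_mul submxMl.
- exact: unitZ.
Qed.

Lemma SS_eq_factor_intercept_iff (i k : 'I_m) : k != i ->
  (forall t : 'I_(a k), exists u, lev k u = t) ->
  (forall Y : 'cV[R]_n, SS lev (fac i) ([set: 'I_m.+1] :\ fac i) Y
                        = SS lev (fac i) [set fac k; ord_max] Y)
  <-> (forall j : 'I_m, j != i -> j != k -> Nmx R lev (fac i) (fac j)
         = Nmx R lev (fac i) (fac k) *m invmx (Rdiag R lev (fac k))
             *m (Nmx R lev (fac j) (fac k))^T).
Proof.
move=> ki occ.
pose Z := X (fac k).
have gramZ : Z^T *m Z = Rdiag R lev (fac k) by exact: Nmx_fac_diag.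
have unitZ : Z^T *m Z \in unitmx by rewrite gramZ Rdiag_unitmx.
have XZ : X ord_max = Z *m const_mx 1 by exact: Xd_max_fac.
have projE j : (X (fac i))^T *m Z *m invmx (Z^T *m Z) *m Z^T *m X (fac j)
   = Nmx R lev (fac i) (fac k) *m invmx (Rdiag R lev (fac k))
       *m (Nmx R lev (fac j) (fac k))^T.
  by rewrite gramZ /Nmx trmx_mul trmxK !mulmxA.
rewrite (@SS_eq_incidence (fac i) _ _ _ Z) ?forall_setD1_fac.
- split => [[_ Nfac] j ji jk | Nfac]; first by rewrite Nfac // projE.
  split; first exact: Nmx_colspace_proj unitZ XZ.
  move=> j ji; have [-> | jk] := eqVneq j k.
    by apply: (@Nmx_colspace_proj _ _ _ Z 1%:M unitZ); rewrite mulmx1.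
  by rewrite projE Nfac.
- apply: spanS_subset; apply/subsetP => j.
  rewrite in_set2 in_setD1 in_setT andbT.
  by case/orP => /eqP ->; rewrite ?(inj_eq lift_inj) // neq_lift.
- apply: (spanS_eqmx (j0 := fac k)); first by rewrite in_set2 eqxx.
    exact: submx_refl.
  move=> j; rewrite in_set2 => /orP[] /eqP ->; first exact: submx_refl.
  by rewrite XZ trmx_mul submxMl.
- exact: unitZ.
Qed.

End Design.

(* With no runs every matrix involved is empty, so both sides hold trivially. *)
Lemma SS_eq_intercept_iff_nil (R : realFieldType) m (a : 'I_m -> nat)
    (lev : forall k : 'I_m, 'I_0 -> 'I_(a k)) (i : 'I_m) :
  (forall Y : 'cV[R]_0, SS lev (fac i) ([set: 'I_m.+1] :\ fac i) Y
                        = SS lev (fac i) [set ord_max] Y)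
  <-> (forall j : 'I_m, j != i -> Nmx R lev (fac i) (fac j)
         = (0%:R)^-1 *: (rvec R lev (fac i) *m (rvec R lev (fac j))^T)).
Proof.
split => _ => [j _ | Y].
  rewrite /Nmx /rvec [Xd R lev (fac i)]flatmx0 [Xd R lev (fac j)]flatmx0.
  by rewrite !(trmx0, mul0mx, mulmx0, scaler0).
by rewrite [Y]flatmx0 /SS /Qmx !(mulmx0, trmx0, mul0mx).
Qed.

Theorem theorem4p4 (R : realFieldType) (n m : nat) (a : 'I_m -> nat)
  (lev : forall k : 'I_m, 'I_n -> 'I_(a k))
  (hm : (3 <= m)%N)
  (hocc : forall (k : 'I_m) (t : 'I_(a k)), exists u : 'I_n, lev k u = t)
  (i : 'I_m) :
  let ibar : {set 'I_m.+1} := [set: 'I_m.+1] :\ fac i in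
  let fm : 'I_m.+1 := inord m.-1 in
  ((forall Y : 'cV[R]_n,
      SS lev (fac i) ibar Y = SS lev (fac i) [set ord_max] Y)
   <->
   (forall j : 'I_m, j != i ->
      Nmx R lev (fac i) (fac j)
      = (n%:R)^-1 *: (rvec R lev (fac i) *m (rvec R lev (fac j))^T)))
  /\
  ((i.+1 < m)%N ->
   ((forall Y : 'cV[R]_n,
      SS lev (fac i) ibar Y = SS lev (fac i) [set fm; ord_max] Y)
    <->
    (forall j : 'I_m, j != i -> (j.+1 < m)%N ->
      Nmx R lev (fac i) (fac j)
      = Nmx R lev (fac i) fm *m invmx (Rdiag R lev fm)
          *m (Nmx R lev (fac j) fm)^T))).
Proof.
move=> ibar fm; split.
  case: n lev hocc => [|n'] lev' _; first exact: SS_eq_intercept_iff_nil.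
  exact: SS_eq_intercept_iff.
move=> i_lt; have last_lt : (m.-1 < m)%N by lia.
pose k : 'I_m := Ordinal last_lt.
have fmE : fm = fac k.
  apply: val_inj; rewrite /= inordK; last lia.
  by rewrite /bump leqNgt last_lt.
have ki : k != i by rewrite -val_eqE /=; lia.
have jkE (j : 'I_m) : (j != k) = (j.+1 < m)%N.
  by rewrite -val_eqE /=; have := ltn_ord j; lia.
rewrite /ibar fmE (SS_eq_factor_intercept_iff R ki (hocc k)).
by split => Nfac j ji; [rewrite -jkE | rewrite jkE]; exact: Nfac.
Qed.
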